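(* Let $(M,d)$ be a bounded uniformly discrete pointed metric space and let $x,y\in M$, $x\neq y$. Then the molecule $m_{xy}$ is an extreme point of $B_{\mathcal F(M)}$ if and only if $[x,y]=\{x,y\}$.
   Context: A pointed metric space $M$ has a distinguished origin $0$; it is uniformly discrete if $\inf\{d(u,v):u\neq v\}>0$. $\mathrm{Lip}_0(M)$ is the Banach space of real Lipschitz functions on $M$ vanishing at $0$ with the best Lipschitz constant as norm; $\delta(x)$ is evaluation at $x$, and the Lipschitz free space $\mathcal F(M)$ is the closed linear span of $\delta(M)$ in $\mathrm{Lip}_0(M)^*$. The molecule is $m_{xy}=(\delta(x)-\delta(y))/d(x,y)$. The metric segment is $[x,y]=\{z\in M: d(x,z)+d(z,y)=d(x,y)\}$. *)

From Stdlib Require Import Reals Lra List.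
Open Scope R_scope.

Record MetricSpace := {
  carrier :> Type;
  dist : carrier -> carrier -> R;
  dist_eq0 : forall x y, dist x y = 0 <-> x = y;
  dist_sym : forall x y, dist x y = dist y x;
  dist_tri : forall x y z, dist x z <= dist x y + dist y z
}.

Arguments dist {_} _ _.

Definition bounded_metric (M : MetricSpace) : Prop :=
  exists B : R, forall u v : M, dist u v <= B.

Definition uniformly_discrete (M : MetricSpace) : Prop :=
  exists e : R, 0 < e /\ forall u v : M, u <> v -> e <= dist u v.

Definition lip_le {M : MetricSpace} (L : R) (f : M -> R) : Prop :=
  forall u v : M, Rabs (f u - f v) <= L * dist u v.

Definition Lip0 {M : MetricSpace} (o : M) (f : M -> R) : Prop :=
  f o = 0 /\ exists L, lip_le L f.

(** Functionals on Lip_0(M); two functionals are identified when they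
    agree on Lip_0(M). *)
Definition functional (M : MetricSpace) := (M -> R) -> R.

Definition feq {M : MetricSpace} (o : M) (phi psi : functional M) : Prop :=
  forall f, Lip0 o f -> phi f = psi f.

Definition dnorm_le {M : MetricSpace} (o : M) (phi : functional M) (r : R) : Prop :=
  forall f, Lip0 o f -> lip_le 1 f -> Rabs (phi f) <= r.

Definition in_dual {M : MetricSpace} (o : M) (phi : functional M) : Prop :=
  (forall f g, Lip0 o f -> Lip0 o g -> phi (fun u => f u + g u) = phi f + phi g) /\
  (forall (c : R) f, Lip0 o f -> phi (fun u => c * f u) = c * phi f) /\
  (exists C, dnorm_le o phi C).

Definition fsub {M : MetricSpace} (phi psi : functional M) : functional M :=
  fun f => phi f - psi f.

Definition fcomb {M : MetricSpace} (t : R) (phi psi : functional M) : functional M :=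
  fun f => t * phi f + (1 - t) * psi f.

Definition delta {M : MetricSpace} (x : M) : functional M := fun f => f x.

Definition lincomb_delta {M : MetricSpace} (l : list (R * M)) : functional M :=
  fun f => fold_right (fun p acc => fst p * f (snd p) + acc) 0 l.

Definition in_span_delta {M : MetricSpace} (o : M) (phi : functional M) : Prop :=
  exists l : list (R * M), feq o phi (lincomb_delta l).

(** Lipschitz free space F(M): closed linear span of delta(M) in Lip_0(M)^* *)
Definition in_free {M : MetricSpace} (o : M) (phi : functional M) : Prop :=
  in_dual o phi /\
  forall eps, 0 < eps ->
    exists psi, in_span_delta o psi /\ dnorm_le o (fsub phi psi) eps.

Definition in_ball_free {M : MetricSpace} (o : M) (phi : functional M) : Prop :=
  in_free o phi /\ dnorm_le o phi 1.

Definition extreme_ball_free {M : MetricSpace} (o : M) (mu : functional M) : Prop :=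
  in_ball_free o mu /\
  forall (a b : functional M) (t : R),
    in_ball_free o a -> in_ball_free o b -> 0 < t < 1 ->
    feq o mu (fcomb t a b) -> feq o a b.

Definition molecule {M : MetricSpace} (x y : M) : functional M :=
  fun f => (f x - f y) / dist x y.

Definition segment {M : MetricSpace} (x y : M) : M -> Prop :=
  fun z => dist x z + dist z y = dist x y.

(* If z lies in [x,y] \ {x,y}, then m_xy is a proper convex combination of the
   distinct molecules m_xz and m_zy.  Conversely, let [x,y] = {x,y} and
   m_xy = t a + (1-t) b with a, b in the ball.  Then a f = 1 for every
   1-Lipschitz f with f x - f y = d(x,y).  At a point p outside [x,y] such an f
   can be lowered by some small dl > 0 (uniform discreteness) and stay norming,
   so a kills the indicator of p, hence every finitely supported function
   vanishing at x and y.  Since a is a norm limit of finite combinations of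
   evaluations, and on a bounded uniformly discrete space a uniform bound on
   a function bounds its Lipschitz constant, a kills every Lipschitz function
   vanishing at x and y.  On the remaining (at most two) dimensions a is fixed
   by the norming functions d(.,y) and -d(.,x), so a = m_xy, and likewise
   b = m_xy. *)

From Stdlib Require Import Reals Lra List Classical ClassicalEpsilon FunctionalExtensionality.
Open Scope R_scope.

Lemma Rabs_le_inv (a b : R) : Rabs a <= b -> - b <= a <= b.
Proof.
  intros H. pose proof (Rle_abs a). pose proof (Rle_abs (- a)).
  rewrite Rabs_Ropp in *. lra.
Qed.

Section Metric.
Variable M : MetricSpace.
Implicit Types u v x y z p : M.

Lemma dist_refl u : dist u u = 0.
Proof. apply (dist_eq0 M). reflexivity. Qed.

Lemma dist_nonneg u v : 0 <= dist u v.
Proof.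
  pose proof (dist_tri M u v u). rewrite dist_refl, (dist_sym M v u) in H. lra.
Qed.

Lemma dist_pos u v : u <> v -> 0 < dist u v.
Proof.
  intros Huv. destruct (dist_nonneg u v) as [H|H]; [exact H|].
  exfalso. apply Huv, (dist_eq0 M). auto.
Qed.

Lemma Rabs_dist_sub_le u v z : Rabs (dist u z - dist v z) <= dist u v.
Proof.
  pose proof (dist_tri M u v z). pose proof (dist_tri M v u z).
  rewrite (dist_sym M v u) in *. apply Rabs_le. lra.
Qed.

Lemma segment_left x y : segment x y x.
Proof. unfold segment. rewrite dist_refl. ring. Qed.

Lemma segment_right x y : segment x y y.
Proof. unfold segment. rewrite dist_refl. ring. Qed.

Lemma segment_dist_gt x y p : ~ segment x y p -> dist x y < dist x p + dist p y.
Proof.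
  intros Hp. destruct (dist_tri M x p y) as [H|H]; [exact H|].
  exfalso. apply Hp. unfold segment. lra.
Qed.

End Metric.

Definition indicator {M : MetricSpace} (p : M) : M -> R :=
  fun u => if excluded_middle_informative (u = p) then 1 else 0.

Lemma indicator_eq {M : MetricSpace} (p : M) : indicator p p = 1.
Proof. unfold indicator. destruct excluded_middle_informative; congruence. Qed.

Lemma indicator_neq {M : MetricSpace} (p u : M) : u <> p -> indicator p u = 0.
Proof. unfold indicator. destruct excluded_middle_informative; congruence. Qed.

Section Lipschitz.
Variables (M : MetricSpace) (o : M).
Implicit Types (f g : M -> R) (u v : M).

Lemma lip_le_weaken L L' f : L <= L' -> lip_le L f -> lip_le L' f.
Proof.
  intros HL Hf u v. pose proof (Hf u v). pose proof (dist_nonneg M u v). nra.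
Qed.

Lemma lip_le_dist z : lip_le 1 (fun u : M => dist u z).
Proof. intros u v. rewrite Rmult_1_l. apply Rabs_dist_sub_le. Qed.

Lemma lip_le_sub_const L f c : lip_le L f -> lip_le L (fun u => f u - c).
Proof.
  intros Hf u v. replace (f u - c - (f v - c)) with (f u - f v) by ring. apply Hf.
Qed.

Lemma lip_le_const_sub L f c : lip_le L f -> lip_le L (fun u => c - f u).
Proof.
  intros Hf u v. replace (c - f u - (c - f v)) with (- (f u - f v)) by ring.
  rewrite Rabs_Ropp. apply Hf.
Qed.

Lemma lip_le_max L f g :
  lip_le L f -> lip_le L g -> lip_le L (fun u => Rmax (f u) (g u)).
Proof.
  intros Hf Hg u v.
  pose proof (Rabs_le_inv _ _ (Hf u v)). pose proof (Rabs_le_inv _ _ (Hg u v)).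
  unfold Rmax. repeat destruct Rle_dec; apply Rabs_le; lra.
Qed.

Lemma Lip0_shift L f : lip_le L f -> Lip0 o (fun u => f u - f o).
Proof. intros Hf. split; [ring | exists L; apply lip_le_sub_const, Hf]. Qed.

Lemma Lip0_dist_shift z : Lip0 o (fun u => dist u z - dist o z).
Proof. apply (Lip0_shift 1), lip_le_dist. Qed.

Lemma Lip0_opp_dist_shift z : Lip0 o (fun u => dist o z - dist u z).
Proof. split; [ring | exists 1; apply lip_le_const_sub, lip_le_dist]. Qed.

Lemma Lip0_zero : Lip0 o (fun _ => 0).
Proof.
  split; [reflexivity | exists 0]. intros u v.
  rewrite Rminus_0_r, Rabs_R0, Rmult_0_l. apply Rle_refl.
Qed.

Lemma Lip0_add f g : Lip0 o f -> Lip0 o g -> Lip0 o (fun u => f u + g u).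
Proof.
  intros [Hf0 [L1 Hf]] [Hg0 [L2 Hg]]. split; [rewrite Hf0, Hg0; ring|].
  exists (L1 + L2). intros u v.
  replace (f u + g u - (f v + g v)) with ((f u - f v) + (g u - g v)) by ring.
  eapply Rle_trans; [apply Rabs_triang|].
  pose proof (Hf u v). pose proof (Hg u v). lra.
Qed.

Lemma Lip0_scale c f : Lip0 o f -> Lip0 o (fun u => c * f u).
Proof.
  intros [Hf0 [L Hf]]. split; [rewrite Hf0; ring|].
  exists (Rabs c * L). intros u v.
  replace (c * f u - c * f v) with (c * (f u - f v)) by ring.
  rewrite Rabs_mult, Rmult_assoc. apply Rmult_le_compat_l; [apply Rabs_pos | apply Hf].
Qed.

Lemma Lip0_sub f g : Lip0 o f -> Lip0 o g -> Lip0 o (fun u => f u - g u).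
Proof.
  intros Hf Hg. replace (fun u => f u - g u) with (fun u => f u + -1 * g u)
    by (extensionality u; ring).
  apply Lip0_add, Lip0_scale; assumption.
Qed.

Lemma Lip0_bounded f : bounded_metric M -> Lip0 o f -> exists C, forall u, Rabs (f u) <= C.
Proof.
  intros [B HB] [Hf0 [L Hf]]. exists (Rabs L * B). intros u.
  specialize (Hf u o). rewrite Hf0, Rminus_0_r in Hf.
  pose proof (dist_nonneg M u o). pose proof (HB u o). pose proof (Rle_abs L).
  pose proof (Rabs_pos L). nra.
Qed.

Section UniformlyDiscrete.
Variables (e : R) (He : 0 < e) (Hud : forall u v : M, u <> v -> e <= dist u v).

Lemma lip_le_of_bounded C f : (forall u, Rabs (f u) <= C) -> lip_le (2 * C / e) f.
Proof.
  intros HC u v. destruct (classic (u = v)) as [<-|Huv].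
  - rewrite dist_refl, Rminus_diag, Rabs_R0, Rmult_0_r. apply Rle_refl.
  - pose proof (Hud u v Huv).
    pose proof (Rabs_le_inv _ _ (HC u)). pose proof (Rabs_le_inv _ _ (HC v)).
    assert (HCe : 0 <= 2 * C / e) by (apply Rle_mult_inv_pos; lra).
    assert (2 * C / e * e = 2 * C) by (field; lra).
    apply Rabs_le. nra.
Qed.

Lemma Lip0_of_bounded C f : f o = 0 -> (forall u, Rabs (f u) <= C) -> Lip0 o f.
Proof. intros Hf0 HC. split; [exact Hf0 | exists (2 * C / e); apply lip_le_of_bounded, HC]. Qed.

Lemma Lip0_indicator p : p <> o -> Lip0 o (indicator p).
Proof.
  intros Hp. apply (Lip0_of_bounded 1); [apply indicator_neq; congruence|].
  intros u. unfold indicator. destruct excluded_middle_informative;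
    rewrite ?Rabs_R1, ?Rabs_R0; lra.
Qed.

Lemma lip_le_dent G dl p :
  lip_le 1 G -> (forall v, v <> p -> Rabs (G p - dl - G v) <= dist p v) ->
  lip_le 1 (fun u => G u - dl * indicator p u).
Proof.
  intros HG Hp u v. rewrite Rmult_1_l.
  destruct (classic (u = p)) as [->|Hu]; destruct (classic (v = p)) as [->|Hv].
  - rewrite Rminus_diag, Rabs_R0. apply dist_nonneg.
  - rewrite indicator_eq, indicator_neq by exact Hv.
    replace (G p - dl * 1 - (G v - dl * 0)) with (G p - dl - G v) by ring. auto.
  - rewrite indicator_eq, indicator_neq by exact Hu.
    replace (G u - dl * 0 - (G p - dl * 1)) with (- (G p - dl - G u)) by ring.
    rewrite Rabs_Ropp, (dist_sym M u p). auto.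
  - rewrite !indicator_neq by assumption.
    replace (G u - dl * 0 - (G v - dl * 0)) with (G u - G v) by ring.
    rewrite <- (Rmult_1_l (dist u v)). apply HG.
Qed.

(* G is the larger of the cone d(x,y) - d(.,x) and a cone at p that lies below
   it at x and y; lowering G at p by dl keeps it 1-Lipschitz since dl <= e. *)
Lemma exists_norming_dent x y p :
  ~ segment x y p ->
  exists G dl, 0 < dl /\ lip_le 1 G /\ lip_le 1 (fun u => G u - dl * indicator p u) /\
               G x - G y = dist x y.
Proof.
  intros Hp.
  pose proof (segment_dist_gt M x y p Hp) as Hs.
  assert (Hpx : p <> x) by (intros ->; apply Hp, segment_left).
  pose proof (Hud x p (not_eq_sym Hpx)) as Hexp.
  set (dl := Rmin e (dist x p + dist p y - dist x y)).
  assert (Hdl : 0 < dl) by (apply Rmin_glb_lt; lra).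
  pose proof (Rmin_l e (dist x p + dist p y - dist x y)) as Hdle.
  pose proof (Rmin_r e (dist x p + dist p y - dist x y)) as Hdls.
  fold dl in Hdle, Hdls.
  set (G := fun u => Rmax (dist x y - dist u x) (dist x y - dist x p + dl - dist u p)).
  assert (HG : lip_le 1 G) by (apply lip_le_max; apply lip_le_const_sub, lip_le_dist).
  exists G, dl. split; [exact Hdl|]. split; [exact HG|]. split.
  - apply lip_le_dent; [exact HG|]. intros v Hv.
    pose proof (Hud v p Hv). pose proof (dist_tri M x v p).
    pose proof (Rabs_le_inv _ _ (HG p v)).
    assert (G p >= dist x y - dist x p + dl).
    { unfold G. rewrite dist_refl.
      pose proof (Rmax_r (dist x y - dist p x) (dist x y - dist x p + dl - 0)). lra. }
    assert (G v <= dist x y - dist x p + dist p v).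
    { unfold G. rewrite (dist_sym M v x), (dist_sym M v p) in *. apply Rmax_lub; lra. }
    apply Rabs_le. lra.
  - unfold G. rewrite !dist_refl, (dist_sym M y x), (dist_sym M y p).
    rewrite !Rmax_left; lra.
Qed.

End UniformlyDiscrete.
End Lipschitz.

Section Dual.
Variables (M : MetricSpace) (o : M) (a : functional M).
Hypothesis Ha : in_dual o a.
Implicit Types f g : M -> R.

Lemma dual_add f g : Lip0 o f -> Lip0 o g -> a (fun u => f u + g u) = a f + a g.
Proof. apply (proj1 Ha). Qed.

Lemma dual_scale c f : Lip0 o f -> a (fun u => c * f u) = c * a f.
Proof. apply (proj1 (proj2 Ha)). Qed.

Lemma dual_sub f g : Lip0 o f -> Lip0 o g -> a (fun u => f u - g u) = a f - a g.
Proof.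
  intros Hf Hg. replace (fun u => f u - g u) with (fun u => f u + -1 * g u)
    by (extensionality u; ring).
  rewrite dual_add, dual_scale by auto using Lip0_scale. ring.
Qed.

Lemma dual_zero : a (fun _ => 0) = 0.
Proof.
  replace (fun _ : M => 0) with (fun u : M => 0 * (fun _ : M => 0) u)
    by (extensionality u; ring).
  rewrite dual_scale by apply Lip0_zero. ring.
Qed.

End Dual.

Arguments dual_add {M o a} Ha {f g}.
Arguments dual_scale {M o a} Ha c {f}.
Arguments dual_sub {M o a} Ha {f g}.
Arguments dual_zero {M o a} Ha.

Lemma dnorm_le_lip {M : MetricSpace} (o : M) (phi : functional M) r L f :
  (forall c g, Lip0 o g -> phi (fun u => c * g u) = c * phi g) ->
  dnorm_le o phi r -> Lip0 o f -> lip_le L f -> 0 < L -> Rabs (phi f) <= r * L.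
Proof.
  intros Hhom Hr Hf HfL HL.
  assert (Hg1 : lip_le 1 (fun u => / L * f u)).
  { intros u v. replace (/ L * f u - / L * f v) with (/ L * (f u - f v)) by ring.
    rewrite Rabs_mult, Rabs_inv, (Rabs_pos_eq L) by lra.
    apply (Rmult_le_reg_l L); [exact HL|].
    rewrite <- Rmult_assoc, Rinv_r, !Rmult_1_l by lra. apply HfL. }
  pose proof (Hr _ (Lip0_scale M o (/ L) f Hf) Hg1) as H.
  rewrite Hhom, Rabs_mult, Rabs_inv, (Rabs_pos_eq L) in H by (assumption || lra).
  apply (Rmult_le_reg_l (/ L)); [apply Rinv_0_lt_compat, HL|].
  replace (/ L * (r * L)) with r by (field; lra). exact H.
Qed.

Lemma lincomb_delta_scale {M : MetricSpace} (l : list (R * M)) c f :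
  lincomb_delta l (fun u => c * f u) = c * lincomb_delta l f.
Proof.
  induction l as [|q l IH]; unfold lincomb_delta in *; simpl; [ring|].
  rewrite IH. ring.
Qed.

Lemma lincomb_delta_eq0 {M : MetricSpace} (l : list (R * M)) f :
  (forall p, In p (map snd l) -> f p = 0) -> lincomb_delta l f = 0.
Proof.
  induction l as [|q l IH]; intros H; [reflexivity|].
  unfold lincomb_delta in *; simpl in *.
  rewrite IH, (H (snd q)) by auto. ring.
Qed.

(* In a uniformly discrete space a bound C on |k| bounds its Lipschitz constant
   by 2C/e, so the approximation of a by a finite combination of evaluations is
   uniform over such k. *)
Lemma free_small_off_finite {M : MetricSpace} (o : M) e (a : functional M) :
  0 < e -> (forall u v : M, u <> v -> e <= dist u v) -> in_free o a ->
  forall C eps, 0 <= C -> 0 < eps ->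
  exists S : list M, forall k, Lip0 o k -> (forall u, Rabs (k u) <= C) ->
    (forall u, In u S -> k u = 0) -> Rabs (a k) <= eps.
Proof.
  intros He Hud [Hda Happrox] C eps HC Heps.
  set (K := 2 * C / e + 1).
  assert (HK : 0 < K)
    by (assert (0 <= 2 * C / e) by (apply Rle_mult_inv_pos; lra); unfold K; lra).
  destruct (Happrox (eps / K)) as [psi [[l Hl] Hpsi]]; [apply Rdiv_lt_0_compat; lra|].
  exists (map snd l). intros k Hk HkC HkS.
  assert (HkK : lip_le K k).
  { apply (lip_le_weaken M (2 * C / e)); [unfold K; lra|]. apply lip_le_of_bounded; assumption. }
  assert (Hhom : forall c g, Lip0 o g -> fsub a psi (fun u => c * g u) = c * fsub a psi g).
  { intros c g Hg. unfold fsub.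
    rewrite (dual_scale Hda c Hg), Hl, Hl, lincomb_delta_scale by auto using Lip0_scale.
    ring. }
  pose proof (dnorm_le_lip o _ _ _ k Hhom Hpsi Hk HkK HK) as H.
  unfold fsub in H. rewrite Hl, lincomb_delta_eq0, Rminus_0_r in H by auto.
  replace (eps / K * K) with eps in H by (field; lra). exact H.
Qed.

Lemma convex_comb_norming {M : MetricSpace} (o : M) (mu a b : functional M) t f :
  dnorm_le o a 1 -> dnorm_le o b 1 -> 0 < t < 1 -> feq o mu (fcomb t a b) ->
  Lip0 o f -> lip_le 1 f -> mu f = 1 -> a f = 1.
Proof.
  intros Ha Hb Ht Hmu Hf Hf1 Hmuf. rewrite Hmu in Hmuf by exact Hf. unfold fcomb in Hmuf.
  pose proof (Rabs_le_inv _ _ (Ha f Hf Hf1)). pose proof (Rabs_le_inv _ _ (Hb f Hf Hf1)).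
  assert (t * (1 - a f) >= 0) by nra.
  assert ((1 - t) * (1 - b f) >= 0) by nra.
  nra.
Qed.

Section Molecule.
Variables (M : MetricSpace) (o : M).
Implicit Types x y z : M.

Lemma molecule_norming x y f : x <> y -> f x - f y = dist x y -> molecule x y f = 1.
Proof.
  intros Hxy Hf. pose proof (dist_pos M x y Hxy). unfold molecule. rewrite Hf. field. lra.
Qed.

Lemma molecule_in_ball x y : x <> y -> in_ball_free o (molecule x y).
Proof.
  intros Hxy. pose proof (dist_pos M x y Hxy) as Hd.
  assert (Hb : dnorm_le o (molecule x y) 1).
  { intros f _ Hf1. unfold molecule, Rdiv.
    rewrite Rabs_mult, Rabs_inv, (Rabs_pos_eq (dist x y)) by lra.
    apply (Rmult_le_reg_r (dist x y)); [exact Hd|].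
    rewrite Rmult_assoc, Rinv_l by lra. specialize (Hf1 x y). lra. }
  split; [split|exact Hb].
  - split; [|split].
    + intros f g _ _. unfold molecule. field. lra.
    + intros c f _. unfold molecule. field. lra.
    + exists 1. exact Hb.
  - intros eps Heps. exists (molecule x y). split.
    + exists ((1 / dist x y, x) :: (-1 / dist x y, y) :: nil).
      intros f _. unfold molecule, lincomb_delta. simpl. field. lra.
    + intros f _ _. unfold fsub. rewrite Rminus_diag, Rabs_R0. lra.
Qed.

Lemma molecule_convex_comb x y z :
  segment x y z -> x <> z -> z <> y ->
  feq o (molecule x y) (fcomb (dist x z / dist x y) (molecule x z) (molecule z y)).
Proof.
  intros Hs Hxz Hzy f _. pose proof (dist_pos M x z Hxz). pose proof (dist_pos M z y Hzy).
  unfold fcomb, molecule. unfold segment in Hs. rewrite <- Hs. field. lra.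
Qed.

Lemma molecules_differ x y z : x <> z -> z <> y -> ~ feq o (molecule x z) (molecule z y).
Proof.
  intros Hxz Hzy Heq. pose proof (dist_pos M x z Hxz). pose proof (dist_pos M z y Hzy).
  set (f := fun u => dist u z - dist o z).
  assert (Hf : Lip0 o f) by apply Lip0_dist_shift.
  assert (E1 : molecule x z f = 1) by (unfold molecule, f; rewrite dist_refl; field; lra).
  assert (E2 : molecule z y f = -1).
  { unfold molecule, f. rewrite dist_refl, (dist_sym M y z). field. lra. }
  rewrite (Heq f Hf) in E1. lra.
Qed.

Lemma segment_trivial_of_extreme x y z :
  x <> y -> extreme_ball_free o (molecule x y) -> segment x y z -> z = x \/ z = y.
Proof.
  intros Hxy [_ Hext] Hs.
  destruct (classic (z = x)) as [|Hzx]; [now left|].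
  destruct (classic (z = y)) as [|Hzy]; [now right|].
  exfalso. apply (molecules_differ x y z); [congruence | exact Hzy|].
  pose proof (dist_pos M x z (not_eq_sym Hzx)). pose proof (dist_pos M z y Hzy).
  unfold segment in Hs.
  assert (Ht : 0 < dist x z / dist x y < 1).
  { rewrite <- Hs. split; [apply Rdiv_lt_0_compat; lra|].
    assert (dist x z / (dist x z + dist z y) = 1 - dist z y / (dist x z + dist z y))
      by (field; lra).
    assert (0 < dist z y / (dist x z + dist z y)) by (apply Rdiv_lt_0_compat; lra).
    lra. }
  apply (Hext _ _ _ (molecule_in_ball x z (not_eq_sym Hzx)) (molecule_in_ball z y Hzy) Ht).
  apply molecule_convex_comb; congruence.
Qed.

End Molecule.

Section MoleculeFace.
Variables (M : MetricSpace) (o x y : M) (e : R).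
Hypotheses (He : 0 < e) (Hud : forall u v : M, u <> v -> e <= dist u v).
Hypotheses (HB : bounded_metric M) (Hxy : x <> y).
Hypothesis Hseg : forall z, segment x y z -> z = x \/ z = y.
Variable a : functional M.
Hypothesis Ha : in_free o a.
Hypothesis Ha_norming :
  forall f, Lip0 o f -> lip_le 1 f -> f x - f y = dist x y -> a f = 1.

Let Hda : in_dual o a := proj1 Ha.

Lemma face_norming_shift f :
  lip_le 1 f -> f x - f y = dist x y -> a (fun u => f u - f o) = 1.
Proof.
  intros Hf Hfxy. apply Ha_norming; [exact (Lip0_shift M o 1 f Hf)| |lra].
  apply lip_le_sub_const, Hf.
Qed.

Lemma face_indicator_eq0 p : ~ segment x y p -> p <> o -> a (indicator p) = 0.
Proof.
  intros Hp Hpo.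
  assert (Hpx : x <> p) by (intros ->; apply Hp, segment_left).
  assert (Hpy : y <> p) by (intros ->; apply Hp, segment_right).
  destruct (exists_norming_dent M e He Hud x y p Hp) as [G [dl [Hdl [HG [HGd HGxy]]]]].
  set (Gd := fun u => G u - dl * indicator p u).
  assert (EG : a (fun u => G u - G o) = 1) by (apply face_norming_shift; assumption).
  assert (EGd : a (fun u => Gd u - Gd o) = 1).
  { apply face_norming_shift; [exact HGd|].
    unfold Gd. rewrite !(indicator_neq p) by assumption. lra. }
  assert (HGd0 : Lip0 o (fun u => Gd u - Gd o)) by exact (Lip0_shift M o 1 Gd HGd).
  assert (Hp0 : Lip0 o (indicator p)) by exact (Lip0_indicator M o e He Hud p Hpo).
  replace (fun u => G u - G o) with (fun u => (Gd u - Gd o) + dl * indicator p u) in EG.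
  - rewrite (dual_add Hda), (dual_scale Hda), EGd in EG by auto using Lip0_scale.
    apply (Rmult_eq_reg_l dl); lra.
  - extensionality u. unfold Gd. rewrite (indicator_neq p o) by congruence. ring.
Qed.

Lemma face_finsupp_eq0 S k :
  Lip0 o k -> k x = 0 -> k y = 0 -> (forall u, ~ In u S -> k u = 0) -> a k = 0.
Proof.
  revert k. induction S as [|p S IH]; intros k Hk Hkx Hky HkS.
  - replace k with (fun _ : M => 0) by (extensionality u; symmetry; auto).
    apply (dual_zero Hda).
  - destruct (Req_dec (k p) 0) as [Hkp|Hkp].
    { apply IH; auto. intros u Hu. destruct (classic (u = p)) as [->|Hup]; [exact Hkp|].
      apply HkS. intros [E|E]; [congruence | contradiction]. }
    assert (Hp : ~ segment x y p)
      by (intros Hs; destruct (Hseg p Hs) as [-> | ->]; contradiction).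
    assert (Hpo : p <> o) by (intros ->; apply Hkp, (proj1 Hk)).
    set (k' := fun u => k u - k p * indicator p u).
    assert (Hp0 : Lip0 o (indicator p)) by exact (Lip0_indicator M o e He Hud p Hpo).
    assert (Hk' : Lip0 o k') by (unfold k'; auto using Lip0_sub, Lip0_scale).
    assert (Ek' : a k' = 0).
    { apply IH; [exact Hk'| | |]; unfold k'.
      - rewrite indicator_neq, Hkx by (intros ->; apply Hp, segment_left). ring.
      - rewrite indicator_neq, Hky by (intros ->; apply Hp, segment_right). ring.
      - intros u Hu. destruct (classic (u = p)) as [->|Hup].
        + rewrite indicator_eq. ring.
        + rewrite indicator_neq by exact Hup.
          rewrite HkS by (intros [E|E]; [congruence | contradiction]). ring. }
    replace k with (fun u => k' u + k p * indicator p u) by (extensionality u; unfold k'; ring).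
    rewrite (dual_add Hda), (dual_scale Hda), face_indicator_eq0, Ek'
      by auto using Lip0_scale.
    ring.
Qed.

Lemma face_vanish_eq0 k : Lip0 o k -> k x = 0 -> k y = 0 -> a k = 0.
Proof.
  intros Hk Hkx Hky.
  destruct (Lip0_bounded M o k HB Hk) as [C HC].
  assert (HC0 : 0 <= C) by (pose proof (HC o); pose proof (Rabs_pos (k o)); lra).
  enough (Rabs (a k) <= 0)
    by (destruct (Req_dec (a k) 0); [assumption | pose proof (Rabs_pos_lt (a k)); lra]).
  apply Rle_plus_epsilon. intros eps Heps. rewrite Rplus_0_l.
  destruct (free_small_off_finite o e a He Hud Ha C eps HC0 Heps) as [S HS].
  set (k2 := fun u => if excluded_middle_informative (In u S) then 0 else k u).
  assert (Hk2C : forall u, Rabs (k2 u) <= C).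
  { intros u. unfold k2. destruct excluded_middle_informative; [rewrite Rabs_R0|]; auto. }
  assert (Hk2 : Lip0 o k2).
  { apply (Lip0_of_bounded M o e He Hud C); [|exact Hk2C].
    unfold k2. destruct excluded_middle_informative; [reflexivity | apply (proj1 Hk)]. }
  assert (Ek1 : a (fun u => k u - k2 u) = 0).
  { apply face_finsupp_eq0 with S; [auto using Lip0_sub| | |]; unfold k2;
      [rewrite Hkx | rewrite Hky | intros u Hu];
      destruct excluded_middle_informative; try ring; contradiction. }
  rewrite (dual_sub Hda) in Ek1 by assumption.
  replace (a k) with (a k2) by lra.
  apply HS; [exact Hk2 | exact Hk2C|].
  intros u Hu. unfold k2. destruct excluded_middle_informative; [reflexivity | contradiction].
Qed.

Lemma face_dist_right : a (fun u => dist u y - dist o y) = 1.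
Proof.
  apply Ha_norming; [apply Lip0_dist_shift | apply lip_le_sub_const, lip_le_dist|].
  rewrite dist_refl. ring.
Qed.

Lemma face_dist_left : a (fun u => dist o x - dist u x) = 1.
Proof.
  apply Ha_norming; [apply Lip0_opp_dist_shift | apply lip_le_const_sub, lip_le_dist|].
  rewrite dist_refl, (dist_sym M y x). ring.
Qed.

(* If o is outside [x,y], the two norming functions above differ at x and at y
   by the same nonzero constant, so they absorb the common value of h. *)
Lemma face_const_xy_eq0 h : Lip0 o h -> h x = h y -> a h = 0.
Proof.
  intros Hh Hhxy.
  destruct (classic (segment x y o)) as [Ho|Ho].
  { pose proof (proj1 Hh) as Hho.
    apply face_vanish_eq0; [exact Hh| |]; destruct (Hseg o Ho) as [<- | <-]; congruence. }
  pose proof (segment_dist_gt M x y o Ho) as Hs. rewrite (dist_sym M x o) in Hs.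
  set (s := dist o x + dist o y - dist x y).
  set (k := fun u => h u + h x / s * ((dist u y - dist o y) - (dist o x - dist u x))).
  assert (Hk : Lip0 o k)
    by (unfold k;
        auto using Lip0_add, Lip0_scale, Lip0_sub, Lip0_dist_shift, Lip0_opp_dist_shift).
  assert (Ek : a k = 0).
  { apply face_vanish_eq0; [exact Hk| |]; unfold k, s;
      rewrite dist_refl, ?(dist_sym M y x), <- ?Hhxy; field; lra. }
  unfold k in Ek.
  rewrite (dual_add Hda), (dual_scale Hda), (dual_sub Hda), face_dist_right, face_dist_left
    in Ek
    by auto using Lip0_scale, Lip0_sub, Lip0_dist_shift, Lip0_opp_dist_shift.
  lra.
Qed.

Lemma face_eq_molecule g : Lip0 o g -> a g = molecule x y g.
Proof.
  intros Hg. pose proof (dist_pos M x y Hxy).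
  set (c := molecule x y g).
  assert (Eh : a (fun u => g u - c * (dist u y - dist o y)) = 0).
  { apply face_const_xy_eq0; [auto using Lip0_sub, Lip0_scale, Lip0_dist_shift|].
    unfold c, molecule. rewrite dist_refl. field. lra. }
  rewrite (dual_sub Hda), (dual_scale Hda), face_dist_right in Eh
    by auto using Lip0_scale, Lip0_dist_shift.
  lra.
Qed.

End MoleculeFace.

Lemma extreme_molecule_of_segment (M : MetricSpace) (o x y : M) e :
  0 < e -> (forall u v : M, u <> v -> e <= dist u v) -> bounded_metric M -> x <> y ->
  (forall z, segment x y z -> z = x \/ z = y) -> extreme_ball_free o (molecule x y).
Proof.
  intros He Hud HB Hxy Hseg. split; [apply molecule_in_ball, Hxy|].
  intros a b t Ha Hb Ht Hm f Hf.
  assert (Hna : forall g, Lip0 o g -> lip_le 1 g -> g x - g y = dist x y -> a g = 1).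
  { intros g Hg Hg1 Hgxy. apply (convex_comb_norming o (molecule x y) a b t);
      try apply Ha; try apply Hb; auto using molecule_norming. }
  assert (Hnb : forall g, Lip0 o g -> lip_le 1 g -> g x - g y = dist x y -> b g = 1).
  { intros g Hg Hg1 Hgxy. apply (convex_comb_norming o (molecule x y) b a (1 - t));
      try apply Ha; try apply Hb; auto using molecule_norming; [lra|].
    intros h Hh. rewrite Hm by exact Hh. unfold fcomb. ring. }
  rewrite (face_eq_molecule M o x y e He Hud HB Hxy Hseg a (proj1 Ha) Hna f Hf),
          (face_eq_molecule M o x y e He Hud HB Hxy Hseg b (proj1 Hb) Hnb f Hf).
  reflexivity.
Qed.

Theorem proposition5p1 (M : MetricSpace) (o : M) (x y : M) :
  bounded_metric M -> uniformly_discrete M -> x <> y ->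
  (extreme_ball_free o (molecule x y) <->
   (forall z : M, segment x y z <-> (z = x \/ z = y))).
Proof.
  intros HB [e [He Hud]] Hxy. split.
  - intros Hext z. split; [apply (segment_trivial_of_extreme M o); assumption|].
    intros [-> | ->]; [apply segment_left | apply segment_right].
  - intros Hseg. apply (extreme_molecule_of_segment M o x y e); try assumption.
    intros z. apply Hseg.
Qed.
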